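(* Let $n\ge2$ and $q_1,q_2\in\mathbb{C}$ with $q_1q_2\ne0$, put $q=-q_2/q_1$, and assume $1+q+\cdots+q^{n-1}\ne0$. Then $\mathbf{E}=\mathbf{L}\oplus\mathbf{F}$, and this is an orthogonal decomposition (with respect to the bilinear form $\langle-,-\rangle$) into $H_n(q_1,q_2)$-submodules, hence also into $\mathbb{C}B_n$-submodules.
   Context: $B_n$ is Artin's braid group with generators $\sigma_1,\dots,\sigma_{n-1}$. The Iwahori--Hecke algebra $H_n(q_1,q_2)$ is generated by $T_1,\dots,T_{n-1}$ subject to the braid relations $T_iT_{i+1}T_i=T_{i+1}T_iT_{i+1}$, $T_iT_j=T_jT_i$ ($|i-j|>1$) and $(T_i-q_1)(T_i-q_2)=0$. Let $\mathbf{E}=\mathbb{C}^n$ with basis $e_1,\dots,e_n$, on which $T_i$ (and $\sigma_i$) act by $e_j\mapsto q_1e_j$ ($j\ne i,i+1$), $e_{i+1}\mapsto-q_2e_i$, $e_i\mapsto(q_1+q_2)e_i+q_1e_{i+1}$ (the generalized Burau representation, which factors through $H_n(q_1,q_2)$). Let $\mathbf{L}=\mathbb{C}(e_1+\cdots+e_n)$ and $\mathbf{F}=\mathrm{span}\{q_2e_i+q_1e_{i+1}:1\le i\le n-1\}$. The symmetric bilinear form on $\mathbf{E}$ is $\langle e_i,e_j\rangle=\delta_{ij}q^{j-1}$. *)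

From HB Require Import structures.
From mathcomp Require Import all_boot all_order all_algebra.
Set Implicit Arguments. Unset Strict Implicit. Unset Printing Implicit Defensive.
Import Order.TTheory GRing.Theory Num.Theory.
Local Open Scope ring_scope.

(* Conventions: E = C^n is the space of row vectors 'rV[C]_n, with 0-based
   basis e_0,...,e_{n-1} (paper's e_1,...,e_n).  A linear endomorphism is
   represented by a matrix M acting on the right: v |-> v *m M, so row j of M
   is the image of e_j.  Generator i (0-based, i < n-1) is the paper's T_{i+1}. *)

(* The matrix of T_{i+1} in the generalized Burau representation:
   e_j |-> q1 e_j (j <> i, i+1), e_{i+1} |-> -q2 e_i,
   e_i |-> (q1+q2) e_i + q1 e_{i+1}. *)
Definition burauT (C : fieldType) (n : nat) (q1 q2 : C) (i : nat) : 'M[C]_n :=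
  \matrix_(j < n, k < n)
    if j == i :> nat then
      (if k == i :> nat then q1 + q2 else if k == i.+1 :> nat then q1 else 0)
    else if j == i.+1 :> nat then
      (if k == i :> nat then - q2 else 0)
    else (if k == j then q1 else 0).

Definition burauL (C : fieldType) (n : nat) : 'M[C]_(1, n) := const_mx 1.

(* F = span { q2 e_i + q1 e_{i+1} : 1 <= i <= n-1 }, rows of this matrix. *)
Definition burauF (C : fieldType) (n : nat) (q1 q2 : C) : 'M[C]_(n.-1, n) :=
  \matrix_(j < n.-1, k < n)
    if k == j :> nat then q2 else if k == j.+1 :> nat then q1 else 0.

(* The symmetric bilinear form <e_i, e_j> = delta_ij q^(j-1) (1-based),
   i.e. q^j for 0-based index j. *)
Definition burauForm (C : fieldType) (n : nat) (q : C) (u v : 'rV[C]_n) : C :=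
  \sum_(j < n) u 0 j * v 0 j * q ^+ j.

From HB Require Import structures.
From mathcomp Require Import all_boot all_order all_algebra.
From mathcomp Require Import ring zify.
Import Order.TTheory GRing.Theory Num.Theory.
Local Open Scope ring_scope.
Set Implicit Arguments. Unset Strict Implicit. Unset Printing Implicit Defensive.

(* Each generator is a rank-one perturbation of a scalar:
   T_i = q1 + c_i^T f_i with c_i = e_i - e_(i+1) and f_i = q2 e_i + q1 e_(i+1)
   the i-th spanning vector of F.  The all-ones row L kills c_i, so L T_i = q1 L,
   and F T_i <= F because f_i lies in F.  Since f_i c_i^T = q2 - q1, the perturbation
   N satisfies N^2 = (q2 - q1) N, which is the Hecke relation
   T_i ((q1 + q2) - T_i) = q1 q2; hence T_i^-1 is a polynomial in T_i and
   preserves every T_i-stable subspace.  Every f_r is annihilated by the column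
   w = (q^k)_k, which is exactly the orthogonality <L, F> = 0, while
   L w = 1 + q + ... + q^(n-1) != 0 separates L from F.  Finally F has rank n - 1
   because its first n - 1 columns form a triangular matrix with diagonal q2. *)

Lemma invmx_mulmx_scalar (C : fieldType) n (A B : 'M[C]_n) b :
  A *m B = b%:M -> b != 0 -> invmx A = b^-1 *: B.
Proof.
move=> AB nzb; have AB1 : A *m (b^-1 *: B) = 1%:M.
  by rewrite -scalemxAr AB scale_scalar_mx mulVf.
by rewrite -[RHS](mulKmx (proj1 (mulmx1_unit AB1))) AB1 mulmx1.
Qed.

Lemma capmx_rV_ker (C : fieldType) m n (u : 'rV[C]_n) (A : 'M_(m, n)) (w : 'cV_n) :
  A *m w = 0 -> u *m w != 0 -> (u :&: A = 0)%MS.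
Proof.
move=> Aw uw; apply/eqP; rewrite -submx0; apply/rV_subP => x.
rewrite sub_capmx submx0 => /andP[/submxP[a ->] /submxP[b xA]].
have: a *m u *m w = 0 by rewrite xA -mulmxA Aw mulmx0.
rewrite [a]mx11_scalar mul_scalar_mx -scalemxAl => /eqP.
by rewrite scaler_eq0 (negbTE uw) orbF => /eqP->; rewrite scale0r.
Qed.

Section Burau.
Variables (C : fieldType) (n : nat).

Definition erow (j : nat) : 'rV[C]_n := \row_k (k == j :> nat)%:R.
Definition ncol (g : nat -> C) : 'cV[C]_n := \col_k g k.

Lemma erow_mul_ncol j g : (j < n)%N -> erow j *m ncol g = (g j)%:M.
Proof.
move=> ltjn; apply/matrixP => a b; rewrite !ord1 !mxE eqxx mulr1n.
rewrite (bigD1 (Ordinal ltjn)) //= big1 => [|k /negbTE]; rewrite !mxE ?eqxx.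
  by rewrite mul1r addr0.
by rewrite -val_eqE /= => ->; rewrite mul0r.
Qed.

Lemma burauL_mul_ncol g : burauL C n *m ncol g = (\sum_(k < n) g k)%:M.
Proof.
apply/matrixP => a b; rewrite !ord1 !mxE eqxx mulr1n.
by apply: eq_bigr => k _; rewrite !mxE mul1r.
Qed.

Lemma tr_burauL : (burauL C n)^T = ncol (fun=> 1).
Proof. by apply/matrixP => a b; rewrite !mxE. Qed.

Variables q1 q2 : C.

Definition burau_f (r : nat) : 'rV[C]_n := q2 *: erow r + q1 *: erow r.+1.
Definition burau_c (i : nat) : 'rV[C]_n := erow i - erow i.+1.

Lemma row_burauF (r : 'I_n.-1) : row r (burauF n q1 q2) = burau_f r.
Proof.
apply/matrixP => a k; rewrite !mxE.
have [->|kr] := eqVneq (k : nat) r; first by rewrite ltn_eqF // mulr1 mulr0 addr0.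
by rewrite mulr0 add0r; case: eqP; rewrite ?mulr1 ?mulr0.
Qed.

Lemma burau_f_mul_ncol r g : (r.+1 < n)%N ->
  burau_f r *m ncol g = (q2 * g r + q1 * g r.+1)%:M.
Proof.
move=> ltr1n; rewrite mulmxDl -!scalemxAl !erow_mul_ncol ?(ltnW ltr1n) //.
by rewrite !scale_scalar_mx raddfD.
Qed.

Section Generator.
Variable i : nat.
Hypothesis lti1n : (i.+1 < n)%N.
Local Notation T := (burauT n q1 q2 i).

Lemma burauT_rank_one : T = q1%:M + (burau_c i)^T *m burau_f i.
Proof.
apply/matrixP => -[j ltjn] -[k ltkn]; rewrite !mxE big_ord1 !mxE -!val_eqE /=.
by do ![case: eqP => ?; try subst]; rewrite /= ?mulr0n ?mulr1n; try lia; ring.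
Qed.

Lemma burauL_mul_burau_c : burauL C n *m (burau_c i)^T = 0.
Proof.
rewrite -[burauL C n]trmxK -trmx_mul tr_burauL mulmxBl.
by rewrite !erow_mul_ncol ?subrr ?trmx0 // ltnW.
Qed.

Lemma burau_f_mul_burau_c : burau_f i *m (burau_c i)^T = (q2 - q1)%:M.
Proof.
have -> : (burau_c i)^T = ncol (fun k => (k == i)%:R - (k == i.+1)%:R).
  by apply/matrixP => j k; rewrite !mxE.
by rewrite burau_f_mul_ncol // !eqxx ltn_eqF // gtn_eqF //= subr0 sub0r mulr1 mulrN1.
Qed.

Lemma burauL_mulT : burauL C n *m T = q1 *: burauL C n.
Proof.
by rewrite burauT_rank_one mulmxDr mul_mx_scalar mulmxA burauL_mul_burau_c mul0mx addr0.
Qed.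

Lemma stablemx_burauF_T : stablemx (burauF n q1 q2) T.
Proof.
have ltin : (i < n.-1)%N by rewrite -ltnS prednK // (ltn_trans _ lti1n).
rewrite burauT_rank_one; apply: stablemxD (stablemxC _ _) _.
rewrite mulmxA (submx_trans (submxMl _ _)) //.
by rewrite -(row_burauF (Ordinal ltin)) row_sub.
Qed.

Lemma burauT_hecke : T *m ((q1 + q2)%:M - T) = (q1 * q2)%:M.
Proof.
rewrite burauT_rank_one; set N := (burau_c i)^T *m burau_f i.
have NN : N *m N = (q2 - q1) *: N.
  by rewrite mulmxA -(mulmxA (burau_c i)^T) burau_f_mul_burau_c mul_mx_scalar -scalemxAl.
have -> : (q1 + q2)%:M - (q1%:M + N) = q2%:M - N.
  by rewrite (raddfD (@scalar_mx C n)) opprD addrACA subrr add0r.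
rewrite mulmxDl !mulmxBr NN -scalar_mxM mul_mx_scalar mul_scalar_mx scalerBl.
by rewrite opprB [q1 *: N + _]addrC addNKr subrK.
Qed.

Lemma stablemx_invmx_burauT m (X : 'M_(m, n)) :
  q1 * q2 != 0 -> stablemx X T -> stablemx X (invmx T).
Proof.
move=> nzq XT; rewrite (invmx_mulmx_scalar burauT_hecke nzq) -mul_scalar_mx.
by apply: stablemxM (stablemxC _ _) _; apply: stablemxD (stablemxC _ _) _; rewrite stablemxN.
Qed.

End Generator.

Lemma row_free_burauF : q2 != 0 -> row_free (burauF n q1 q2).
Proof.
move=> nzq2; set F := burauF n q1 q2.
pose F0 := colsub (widen_ord (leq_pred n)) F.
have trigF0 : is_trig_mx F0^T.
  by apply/is_trig_mxP => k r ltkr; rewrite !mxE /= !ltn_eqF // ltnW.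
have unitF0 : F0 \in unitmx.
  rewrite unitmxE -det_tr det_trig //.
  under eq_bigr => r _ do rewrite !mxE eqxx.
  by rewrite prodr_const unitfE expf_neq0.
rewrite /row_free eqn_leq rank_leq_row -{1}(mxrank_unit unitF0).
by rewrite /F0 -[X in colsub _ X]mulmx1 -mulmx_colsub mxrankM_maxl.
Qed.

Variable q : C.
Local Notation w := (ncol (fun k => q ^+ k)).

Lemma burauF_mul_geom : q1 * q = - q2 -> burauF n q1 q2 *m w = 0.
Proof.
move=> q1q; apply/row_matrixP => r; rewrite row_mul row0 row_burauF.
have ltr1n : (r.+1 < n)%N by have := ltn_ord r; lia.
by rewrite burau_f_mul_ncol // exprS mulrA -mulrDl q1q subrr mul0r raddf0.
Qed.

Lemma burauForm_scale_burauL a v : burauForm q (a *: burauL C n) v = a * (v *m w) 0 0.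
Proof.
rewrite /burauForm mxE mulr_sumr; apply: eq_bigr => j _.
by rewrite !mxE mulr1 mulrA.
Qed.

End Burau.

Theorem corollary3p6 (C : numClosedFieldType) (n : nat) (q1 q2 : C) :
  (2 <= n)%N ->
  q1 * q2 != 0 ->
  let q := - q2 / q1 in
  \sum_(k < n) q ^+ k != 0 ->
  let L := burauL C n in
  let F := burauF n q1 q2 in
  (* E = L (+) F : the sum is direct and equals the whole space *)
  [/\ mxdirect (L + F)%MS,
      (L + F :=: (1%:M : 'M[C]_n))%MS,
  (* orthogonality with respect to <-,-> *)
      (forall u v : 'rV[C]_n, (u <= L)%MS -> (v <= F)%MS -> burauForm q u v = 0),
  (* H_n(q1,q2)-submodules: stable under every generator T_i *)
      (forall i : nat, (i.+1 < n)%N ->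
         (L *m burauT n q1 q2 i <= L)%MS /\ (F *m burauT n q1 q2 i <= F)%MS)
  (* C B_n-submodules: also stable under the inverses sigma_i^{-1} *)
    & (forall i : nat, (i.+1 < n)%N ->
         (L *m invmx (burauT n q1 q2 i) <= L)%MS /\
         (F *m invmx (burauT n q1 q2 i) <= F)%MS)].
Proof.
move=> le2n nzq q sum_q L F.
have [nzq1 nzq2] : q1 != 0 /\ q2 != 0 by apply/andP; rewrite -negb_or -mulf_eq0.
have Fw : F *m ncol n (fun k => q ^+ k) = 0.
  by apply: burauF_mul_geom; rewrite mulrC divfK.
have Lw : L *m ncol n (fun k => q ^+ k) != 0.
  rewrite burauL_mul_ncol; apply: contraNneq sum_q => /matrixP/(_ 0 0).
  by rewrite !mxE mulr1n => ->.
have LF0 := capmx_rV_ker Fw Lw.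
have stabT i : (i.+1 < n)%N -> stablemx L (burauT n q1 q2 i) /\ stablemx F (burauT n q1 q2 i).
  by move=> lti1n; rewrite burauL_mulT // scalemx_sub // stablemx_burauF_T.
split.
- exact/mxdirect_addsP.
- apply/eqmxP; rewrite submx1 sub1mx /row_full mxrank_disjoint_sum //.
  have nzL : L != 0 by apply: contraNneq Lw => ->; rewrite mul0mx.
  by rewrite rank_rV nzL (eqP (row_free_burauF n q1 nzq2)) add1n prednK ?eqxx // ltnW.
- move=> u v /submxP[a ->] /submxP[b ->].
  by rewrite [a]mx11_scalar mul_scalar_mx burauForm_scale_burauL -mulmxA Fw mulmx0 mxE mulr0.
- exact: stabT.
- by move=> i /[dup] /stabT[? ?] lti1n; split; apply: stablemx_invmx_burauT.
Qed.
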